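(* For all integers $n, k \geq 1$ with $n \geq k$, $$\sum_{i=k}^{n} \frac{S(n,i)\, s(i,k)}{i} = \frac{1}{n}\binom{n}{k} B_{n-k} + \delta_{n-1,k},$$ where $\delta$ denotes the Kronecker delta.
   Context: For $n \geq 0$, $X^{\underline{n}} := X(X-1)\cdots(X-n+1)$ ($X^{\underline{0}}=1$). The (signed) Stirling numbers of the first kind $s(n,k)$ are defined by $X^{\underline{n}} = \sum_{k=0}^{n} s(n,k) X^k$, and the Stirling numbers of the second kind $S(n,k)$ by $X^n = \sum_{k=0}^{n} S(n,k) X^{\underline{k}}$ (for all $n\ge 0$), with $s(n,k)=S(n,k)=0$ when $n<k$. The Bernoulli numbers $B_n$ are defined by $\frac{t}{e^t-1} = \sum_{n\ge 0} B_n \frac{t^n}{n!}$. *)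

From mathcomp Require Import all_boot all_order all_algebra.
Set Implicit Arguments. Unset Strict Implicit. Unset Printing Implicit Defensive.
Import GRing.Theory Num.Theory.
Local Open Scope ring_scope.

Definition falling_poly (n : nat) : {poly rat} :=
  \prod_(i < n) ('X - (i%:R)%:P).

Definition stirling1 (n k : nat) : rat := (falling_poly n)`_k.

Fixpoint stirling2 (n k : nat) : rat :=
  match n, k with
  | 0, 0 => 1
  | 0, _.+1 => 0
  | _.+1, 0 => 0
  | n'.+1, k'.+1 => k'.+1%:R * stirling2 n' k + stirling2 n' k'
  end.

(* Bernoulli numbers with t/(e^t-1) = sum B_n t^n/n!  (B_1 = -1/2):
   B_0 = 1 and for n >= 1, sum_{j=0}^{n} C(n+1,j) B_j = 0. *)
Fixpoint bernoulli_aux (n : nat) : seq rat :=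
  match n with
  | 0 => [:: 1]
  | n'.+1 =>
      let s := bernoulli_aux n' in
      rcons s (- (\sum_(j < n'.+1) ('C(n'.+2, j))%:R * nth 0 s j) / (n'.+2)%:R)
  end.

Definition bernoulli (n : nat) : rat := nth 0 (bernoulli_aux n) n.

From mathcomp Require Import all_boot all_order all_algebra.
From mathcomp Require Import zify ring.
Import GRing.Theory Num.Theory.
Local Open Scope ring_scope.

(* The recurrence S(n, i) = i S(n-1, i) + S(n-1, i-1) splits
   sum_i S(n, i)/i (X)_i into sum_i S(n-1, i) (X)_i - S(n-1, 0), which is
   X^(n-1) - S(n-1, 0), and sum_i S(n-1, i)/(i+1) (X)_(i+1).  The latter, like
   the Faulhaber polynomial (1/n) sum_j C(n, j) B_j X^(n-j), vanishes at 0 and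
   has forward difference X^(n-1), so the two agree on all natural numbers and
   are equal.  Since s(i, k) is the coefficient of X^k in (X)_i, comparing the
   coefficients of X^k gives the identity. *)

Lemma size_bernoulli_aux n : size (bernoulli_aux n) = n.+1.
Proof. by elim: n => //= n IHn; rewrite size_rcons IHn. Qed.

Lemma nth_bernoulli_aux n j :
  (j <= n)%N -> nth 0 (bernoulli_aux n) j = bernoulli j.
Proof.
elim: n => [|n IHn]; first by rewrite leqn0 => /eqP ->.
rewrite leq_eqVlt => /predU1P[-> //|lt_jn].
by rewrite /= nth_rcons size_bernoulli_aux lt_jn IHn.
Qed.

Lemma sum_bin_bernoulli r : (0 < r)%N ->
  \sum_(j < r) 'C(r, j)%:R * bernoulli j = (r == 1)%:R.
Proof.
case: r => [//|[|r]] _; first by rewrite big_ord1 mulr1.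
have Br : bernoulli r.+1 =
    - (\sum_(j < r.+1) 'C(r.+2, j)%:R * bernoulli j) / r.+2%:R.
  rewrite /bernoulli /= nth_rcons size_bernoulli_aux ltnn eqxx.
  by congr (- _ / _); apply: eq_bigr => j _; rewrite nth_bernoulli_aux // -ltnS.
by rewrite big_ord_recr /= binSn Br mulrC divfK ?pnatr_eq0 // addrN.
Qed.

Lemma exchange_big_triangle (V : nmodType) N (F : nat -> nat -> V) :
  \sum_(i < N) \sum_(j < N - i) F i j = \sum_(j < N) \sum_(i < N - j) F i j.
Proof.
have widen i (G : nat -> V) :
    \sum_(j < N - i) G j = \sum_(j < N) (if (i + j < N)%N then G j else 0).
  rewrite (big_ord_widen N G) ?leq_subr // big_mkcond.
  by apply: eq_bigr => j _; rewrite ltn_subRL.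
rewrite (eq_bigr _ (fun (i : 'I_N) _ => widen i (F i))).
rewrite [RHS](eq_bigr _ (fun (j : 'I_N) _ => widen j (F^~ j))) exchange_big.
by apply: eq_bigr => j _; apply: eq_bigr => i _; rewrite addnC.
Qed.

Lemma sum_ord_shift (V : nmodType) N (F : nat -> V) : F 0%N = 0 -> F N = 0 ->
  \sum_(i < N) F i.+1 = \sum_(i < N) F i.
Proof.
move=> F0 FN; transitivity (\sum_(i < N.+1) F i).
  by rewrite big_ord_recl F0 add0r; apply: eq_bigr => i _; rewrite lift0.
by rewrite big_ord_recr /= FN addr0.
Qed.

Lemma exprD1n_sub (R : pzRingType) (x : R) r :
  (x + 1) ^+ r - x ^+ r = \sum_(l < r) x ^+ l *+ 'C(r, l).
Proof.
case: r => [|r]; first by rewrite !expr0 subrr big_ord0.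
by rewrite exprD1n big_ord_recr /= binn mulr1n addrK.
Qed.

Lemma mul_bin_sub_swap n j l : (j + l <= n)%N ->
  ('C(n, j) * 'C(n - j, l) = 'C(n, l) * 'C(n - l, j))%N.
Proof.
move=> jln; apply/eqP.
rewrite -(eqn_pmul2r (_ : 0 < j`! * l`! * (n - j - l)`!)%N); last first.
  by rewrite !muln_gt0 !fact_gt0.
have /bin_fact fj : (j <= n)%N by lia.
have /bin_fact fl : (l <= n)%N by lia.
have /bin_fact flj : (l <= n - j)%N by lia.
have /bin_fact fjl : (j <= n - l)%N by lia.
apply/eqP; transitivity n`!.
  by rewrite -fj -flj; ring.
by rewrite -fl -fjl (subnAC n j l); ring.
Qed.

Lemma poly_eq_on_nat (R : numDomainType) (p q : {poly R}) :
  (forall N : nat, p.[N%:R] = q.[N%:R]) -> p = q.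
Proof.
move=> pq; apply/eqP; rewrite -subr_eq0; apply/eqP.
apply: (@roots_geq_poly_eq0 _ _ [seq N%:R | N <- iota 0 (size (p - q))]).
- by apply/allP => _ /mapP[N _ ->]; rewrite /root !hornerE pq subrr.
- by rewrite map_inj_uniq ?iota_uniq // => a b /eqP; rewrite eqr_nat => /eqP.
- by rewrite size_map size_iota.
Qed.

Lemma poly_eq_difference (R : numDomainType) (p q : {poly R}) :
  p.[0] = q.[0] ->
  (forall x, p.[x + 1] - p.[x] = q.[x + 1] - q.[x]) -> p = q.
Proof.
move=> pq0 dpq; apply: poly_eq_on_nat; elim=> [//|N IHN].
by rewrite -addn1 natrD -[p.[_]](subrK p.[N%:R]) -[q.[_]](subrK q.[N%:R]) dpq IHN.
Qed.

Lemma falling_poly0 : falling_poly 0 = 1.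
Proof. by rewrite /falling_poly big_ord0. Qed.

Lemma falling_polyS i : falling_poly i.+1 = falling_poly i * ('X - i%:R%:P).
Proof. by rewrite /falling_poly big_ord_recr. Qed.

Lemma size_falling_poly i : size (falling_poly i) = i.+1.
Proof. by rewrite size_prod_XsubC -[index_enum _]enumT size_enum_ord. Qed.

Lemma stirling1_small i k : (i < k)%N -> stirling1 i k = 0.
Proof. by move=> lt_ik; rewrite /stirling1 nth_default // size_falling_poly. Qed.

Lemma coef_sum_scale_falling_poly (a : nat -> rat) N k : (k <= N)%N ->
  (\sum_(i < N) a i *: falling_poly i)`_k = \sum_(k <= i < N) a i * stirling1 i k.
Proof.
move=> le_kN; rewrite coef_sum -(big_mkord xpredT (fun i => (a i *: falling_poly i)`_k)).
rewrite (@big_cat_nat _ _ _ k) //= big1_seq ?add0r => [|i]; last first.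
  rewrite mem_index_iota => /andP[_ lt_ik].
  by rewrite coefZ -/(stirling1 i k) stirling1_small ?mulr0.
by apply: eq_bigr => i _; rewrite coefZ.
Qed.

Lemma horner_falling_poly i x :
  (falling_poly i).[x] = \prod_(j < i) (x - j%:R).
Proof. by rewrite horner_prod; apply: eq_bigr => j _; rewrite hornerXsubC. Qed.

Lemma horner_falling_polyS0 i : (falling_poly i.+1).[0] = 0.
Proof. by rewrite horner_falling_poly big_ord_recl subrr mul0r. Qed.

Lemma falling_poly_difference i x :
  (falling_poly i.+1).[x + 1] - (falling_poly i.+1).[x]
  = i.+1%:R * (falling_poly i).[x].
Proof.
rewrite [in X in X - _]horner_falling_poly big_ord_recl subr0.
rewrite falling_polyS hornerM hornerXsubC horner_falling_poly.
have shift (j : nat) : x + 1 - j.+1%:R = x - j%:R by rewrite -addn1 natrD; ring.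
under eq_bigr do rewrite lift0 shift.
by rewrite -addn1 natrD; ring.
Qed.

Lemma mulX_falling_poly i :
  'X * falling_poly i = falling_poly i.+1 + i%:R *: falling_poly i.
Proof. by rewrite falling_polyS -mul_polyC; ring. Qed.

Lemma stirling2_small m i : (m < i)%N -> stirling2 m i = 0.
Proof.
elim: m i => [|m IHm] [|i] //= lt_mi.
by rewrite !IHm ?mulr0 ?add0r // ltnW.
Qed.

Lemma expX_stirling2 m :
  'X^m = \sum_(i < m.+1) stirling2 m i *: falling_poly i.
Proof.
elim: m => [|m IHm]; first by rewrite big_ord1 scale1r falling_poly0.
rewrite big_ord_recl scale0r add0r exprS IHm mulr_sumr.
under eq_bigr do rewrite -scalerAr mulX_falling_poly scalerDr.
under [RHS]eq_bigr do rewrite lift0 [stirling2 _ _]/= scalerDl.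
rewrite !big_split /= addrC; congr (_ + _).
rewrite (@sum_ord_shift _ _ (fun i => (i%:R * stirling2 m i) *: falling_poly i)) /=.
- by apply: eq_bigr => i _; rewrite scalerA mulrC.
- by rewrite mul0r scale0r.
- by rewrite stirling2_small ?mulr0 ?scale0r.
Qed.

Definition faulhaber_poly m : {poly rat} :=
  \sum_(j < m.+1) ('C(m.+1, j)%:R * bernoulli j / m.+1%:R) *: 'X^(m.+1 - j).

Lemma horner_faulhaber_poly m x : (faulhaber_poly m).[x] =
  \sum_(j < m.+1) 'C(m.+1, j)%:R * bernoulli j / m.+1%:R * x ^+ (m.+1 - j).
Proof. by rewrite horner_sum; apply: eq_bigr => j _; rewrite hornerZ hornerXn. Qed.

Lemma faulhaber_poly0 m : (faulhaber_poly m).[0] = 0.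
Proof.
rewrite horner_faulhaber_poly big1 // => j _.
by rewrite expr0n subn_eq0 leqNgt ltn_ord mulr0.
Qed.

Lemma faulhaber_poly_difference m x :
  (faulhaber_poly m).[x + 1] - (faulhaber_poly m).[x] = x ^+ m.
Proof.
set c := fun l : nat => 'C(m.+1, l)%:R / m.+1%:R * x ^+ l.
have inner l : (l < m.+1)%N ->
    \sum_(j < m.+1 - l)
       'C(m.+1, j)%:R * bernoulli j / m.+1%:R * (x ^+ l *+ 'C(m.+1 - j, l))
    = c l * (m.+1 - l == 1)%N%:R.
  move=> lt_lm; rewrite -sum_bin_bernoulli ?subn_gt0 // mulr_sumr.
  apply: eq_bigr => j _.
  have le_jl : (j + l <= m.+1)%N by have := ltn_ord j; lia.
  have swap : 'C(m.+1, j)%:R * 'C(m.+1 - j, l)%:R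
             = 'C(m.+1, l)%:R * 'C(m.+1 - l, j)%:R :> rat.
    by rewrite -!natrM mul_bin_sub_swap.
  rewrite /c -mulr_natr.
  transitivity ('C(m.+1, j)%:R * 'C(m.+1 - j, l)%:R
                * (bernoulli j / m.+1%:R * x ^+ l)); first by ring.
  by rewrite swap; ring.
rewrite !horner_faulhaber_poly -sumrB.
under eq_bigr do rewrite -mulrBr exprD1n_sub mulr_sumr.
rewrite (@exchange_big_triangle _ _ (fun j l =>
  'C(m.+1, j)%:R * bernoulli j / m.+1%:R * (x ^+ l *+ 'C(m.+1 - j, l)))).
rewrite (eq_bigr _ (fun (l : 'I_m.+1) _ => inner l (ltn_ord l))).
rewrite big_ord_recr /= big1 => [|l _]; last first.
  by rewrite (_ : m.+1 - l == 1 = false)%N ?mulr0 //; have := ltn_ord l; lia.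
by rewrite add0r subSnn mulr1 /c binSn mulfV ?pnatr_eq0 ?mul1r.
Qed.

Lemma coef_faulhaber_poly m k : (0 < k <= m.+1)%N ->
  (faulhaber_poly m)`_k = 'C(m.+1, k)%:R * bernoulli (m.+1 - k) / m.+1%:R.
Proof.
case/andP=> k_gt0 le_km; have lt_jm : (m.+1 - k < m.+1)%N by lia.
rewrite coef_sum (bigD1 (Ordinal lt_jm)) //= big1 => [|j /eqP neq_j]; last first.
  rewrite coefZ coefXn (_ : k == m.+1 - j = false)%N ?mulr0 //.
  by apply/eqP => kE; apply: neq_j; apply: val_inj => /=; have := ltn_ord j; lia.
by rewrite coefZ coefXn subKn // eqxx mulr1 bin_sub // addr0.
Qed.

Lemma stirling2_falling_faulhaber m :
  \sum_(i < m.+1) (stirling2 m i / i.+1%:R) *: falling_poly i.+1 = faulhaber_poly m.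
Proof.
apply: poly_eq_difference => [|x].
  rewrite faulhaber_poly0 horner_sum big1 // => i _.
  by rewrite hornerZ horner_falling_polyS0 mulr0.
rewrite faulhaber_poly_difference !horner_sum -sumrB.
have := congr1 (horner^~ x) (expX_stirling2 m); rewrite hornerXn horner_sum => ->.
apply: eq_bigr => i _; rewrite !hornerZ -mulrBr falling_poly_difference mulrA.
by rewrite divfK ?pnatr_eq0.
Qed.

Lemma sum_stirling2_div_falling m :
  \sum_(i < m.+2) (stirling2 m.+1 i / i%:R) *: falling_poly i
  = 'X^m - (stirling2 m 0)%:P + faulhaber_poly m.
Proof.
rewrite -stirling2_falling_faulhaber big_ord_recl mul0r scale0r add0r.
under eq_bigr do rewrite lift0 [stirling2 _ _]/= mulrDl scalerDl.
rewrite big_split /=; congr (_ + _).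
rewrite expX_stirling2 [in RHS]big_ord_recl falling_poly0 -alg_polyC.
rewrite addrAC subrr add0r.
rewrite big_ord_recr /= stirling2_small // mulr0 mul0r scale0r addr0.
by apply: eq_bigr => i _; rewrite [_ * stirling2 _ _]mulrC mulfK ?pnatr_eq0.
Qed.

Theorem corollary4 (n k : nat) (hk : (1 <= k)%N) (hkn : (k <= n)%N) :
  \sum_(k <= i < n.+1) stirling2 n i * stirling1 i k / i%:R
  = ('C(n, k))%:R * bernoulli (n - k) / n%:R + (if n.-1 == k then 1 else 0).
Proof.
case: n hkn => [|m] le_km; first by case: k hk le_km.
under eq_bigr do rewrite mulrAC.
rewrite -coef_sum_scale_falling_poly ?(leqW le_km) // sum_stirling2_div_falling.
rewrite coefD coefB coefXn coefC coef_faulhaber_poly ?hk //.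
by rewrite (gtn_eqF hk) subr0 addrC eq_sym; case: (m == k).
Qed.
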